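(* Let $\{p_n\}_{n\geq1}$ be real numbers with $0<p_n<p_{n+1}$ for all $n\geq1$ and $\lim_{n\to\infty}p_n=\infty$. Then there exists a real solution $\lambda_*>0$ of the continued fraction equation $$\lambda p_1=\cfrac{1}{\lambda p_2-\cfrac{1}{\lambda p_3-\cfrac{1}{\lambda p_4-\cdots}}}$$ satisfying $$\frac{1}{\sqrt{p_1p_2}}<\lambda_*<\frac{1}{\sqrt{p_1p_2-p_1^2}},$$ and, with $\lambda=\lambda_*$, the sequence $\{c_n\}$ defined by $c_1=p_1$, $\eta_2=-\lambda_*p_1$, $\eta_{n+1}=-\lambda_*p_n-1/\eta_n$ for $n\geq2$, and $c_n=p_n\eta_n\eta_{n-1}\cdots\eta_2$ for $n\geq2$, decays exponentially fast for all sufficiently large $n$ and satisfies, for $s\geq 0$, $$\|n^sc_n\|_{\ell^2(\mathbb{N})}\leq C\Big(n_0^{s}+\frac{p_2}{p_1}\Big)\|c_n\|_{\ell^2(\mathbb{N})},$$ where $n_0$ is the largest integer with $p_{n_0}\leq4p_2$ and $C>0$ is a constant.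
   Context: The infinite continued fraction is understood as follows. For $n\geq2$ and $\lambda\geq 2/p_n$ let $G_n(\lambda)=\frac{\lambda p_n-\sqrt{\lambda^2p_n^2-4}}{2}$ (formally the continued fraction with all entries $\lambda p_n$). For $n\geq2$, $k\geq0$ let $F_{n,k}(\lambda)=\cfrac{1}{\lambda p_n-\cfrac{1}{\lambda p_{n+1}-\cdots\cfrac{1}{\lambda p_{n+k}-G_{n+k+1}(\lambda)}}}$, and $F_n(\lambda)=\lim_{k\to\infty}F_{n,k}(\lambda)$ where this limit exists; the equation is $\lambda p_1=F_2(\lambda)$. *)

From Stdlib Require Import Reals Lra.
From Coquelicot Require Import Coquelicot.
Open Scope R_scope.

(* Sequences p are indexed from 1: p 1, p 2, ...; the value p 0 is irrelevant. *)

(* G_n(lambda) = (lambda p_n - sqrt(lambda^2 p_n^2 - 4)) / 2,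
   meaningful when lambda >= 2 / p_n. *)
Definition Gcf (p : nat -> R) (lam : R) (n : nat) : R :=
  (lam * p n - sqrt (lam ^ 2 * (p n) ^ 2 - 4)) / 2.

(* F_{n,k}(lambda): finite continued fraction with entries lambda p_n, ...,
   lambda p_{n+k} and tail G_{n+k+1}(lambda). *)
Fixpoint Fcf (p : nat -> R) (lam : R) (n k : nat) : R :=
  match k with
  | O => 1 / (lam * p n - Gcf p lam (S n))
  | S k' => 1 / (lam * p n - Fcf p lam (S n) k')
  end.

Fixpoint Fcf_defined (p : nat -> R) (lam : R) (n k : nat) : Prop :=
  match k with
  | O => lam >= 2 / p (S n) /\ lam * p n - Gcf p lam (S n) <> 0
  | S k' => Fcf_defined p lam (S n) k' /\ lam * p n - Fcf p lam (S n) k' <> 0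
  end.

Definition Fcf_lim (p : nat -> R) (lam : R) (n : nat) (L : R) : Prop :=
  (exists K : nat, forall k : nat, (K <= k)%nat -> Fcf_defined p lam n k) /\
  is_lim_seq (fun k => Fcf p lam n k) L.

Definition cf_equation (p : nat -> R) (lam : R) : Prop :=
  Fcf_lim p lam 2%nat (lam * p 1%nat).

(* eta_2 = - lambda p_1, eta_{n+1} = - lambda p_n - 1/eta_n  (n >= 2).
   eta_aux p lam m = eta_{m+2}. *)
Fixpoint eta_aux (p : nat -> R) (lam : R) (m : nat) : R :=
  match m with
  | O => - lam * p 1%nat
  | S m' => - lam * p (S (S m')) - 1 / eta_aux p lam m'
  end.

Definition eta (p : nat -> R) (lam : R) (n : nat) : R := eta_aux p lam (n - 2).

Fixpoint eta_prod (p : nat -> R) (lam : R) (n : nat) : R :=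
  match n with
  | O => 1
  | S O => 1
  | S n' => eta_prod p lam n' * eta p lam n
  end.

Definition cseq (p : nat -> R) (lam : R) (n : nat) : R :=
  p n * eta_prod p lam n.

Definition l2sq (a : nat -> R) : R := Series (fun k => (a (S k)) ^ 2).
Definition l2_finite (a : nat -> R) : Prop := ex_series (fun k => (a (S k)) ^ 2).

(* Running the recursion [eta_(n+1) = - lam p_n - 1/eta_n] forward from
   [eta_2 = - lam p_1] produces candidate values [rho_m = - eta_(m+2)] for the tails
   [F_(m+2)(lam)] of the continued fraction; call [lam] admissible when all of them are
   positive.  Admissibility is upward closed and holds at
   [U = 1/sqrt(p_1 p_2 - p_1^2)], where [U p_1] is a fixed point of the recursion, so
   there is a least admissible [ls].  At [ls] the [rho_m] are eventually at most
   1: otherwise, by continuity in [lam], a smaller value would still be admissible.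
   Since [lam p_n -> oo], the continued fraction is then a contraction on its tail, so
   [F_(m+2)(ls) = rho_m], and [m = 0] is the equation.  The same bounds give
   [|c_(n+1)| <= |c_n| / 3] beyond [n_0], hence exponential decay and, against the
   polynomial weight [n^s], the weighted l^2 estimate. *)

From Stdlib Require Import Reals Lra Lia Classical.
From Coquelicot Require Import Coquelicot.
Open Scope R_scope.

Definition pos_increasing (p : nat -> R) : Prop :=
  forall n : nat, (1 <= n)%nat -> 0 < p n /\ p n < p (S n).

Fixpoint rho (p : nat -> R) (lam : R) (m : nat) : R :=
  match m with
  | O => lam * p 1%nat
  | S m' => lam * p (S (S m')) - 1 / rho p lam m'
  end.

Definition admissible (p : nat -> R) (lam : R) : Prop :=
  0 < lam /\ forall m, 0 < rho p lam m.

Definition tail_bounded (p : nat -> R) (lam : R) (N : nat) : Prop :=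
  forall m, (N <= m)%nat -> 4 <= lam * p (S (S m)) /\ rho p lam m <= 1.

Lemma eta_SS p lam m : eta p lam (S (S m)) = - rho p lam m.
Proof.
  unfold eta; replace (S (S m) - 2)%nat with m by lia.
  induction m as [|m IH]; simpl; [ring|].
  rewrite IH; unfold Rdiv; rewrite Rinv_opp; ring.
Qed.

Lemma rho_SS_eq p lam m : 0 < rho p lam m ->
  rho p lam m * (lam * p (S (S m)) - rho p lam (S m)) = 1.
Proof. intro Hm; simpl; field; lra. Qed.

Lemma rho_le_inv3 p lam m : 0 < rho p lam m -> 4 <= lam * p (S (S m)) ->
  rho p lam (S m) <= 1 -> rho p lam m <= 1 / 3.
Proof. intros Hm Hp H1; pose proof (rho_SS_eq p lam m Hm); nra. Qed.

Lemma cont_pt_ball f x : continuity_pt f x -> forall eps, 0 < eps ->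
  exists d, 0 < d /\ forall y, Rabs (y - x) < d -> Rabs (f y - f x) < eps.
Proof.
  intros Hf eps Heps; destruct (Hf eps Heps) as [d [Hd Hy]].
  exists d; split; [exact Hd|]; intros y Hyx.
  destruct (Req_dec y x) as [->|Hne].
  - rewrite Rminus_diag, Rabs_R0; exact Heps.
  - apply (Hy y); repeat split; auto.
Qed.

Section Increasing.

Variable p : nat -> R.
Hypothesis Hp : pos_increasing p.

Lemma p_pos n : (1 <= n)%nat -> 0 < p n.
Proof. intro Hn; apply (Hp n Hn). Qed.

Lemma p_le m n : (1 <= m)%nat -> (m <= n)%nat -> p m <= p n.
Proof.
  intros Hm Hmn; induction Hmn as [|n Hmn IH]; [lra|].
  destruct (Hp n ltac:(lia)); lra.
Qed.

Lemma rho_le_lam l1 l2 : 0 < l1 <= l2 -> (forall m, 0 < rho p l1 m) ->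
  forall m, rho p l1 m <= rho p l2 m.
Proof.
  intros Hl Hpos m; induction m as [|m IH]; simpl.
  - pose proof (p_pos 1 (le_n 1)); nra.
  - pose proof (p_pos (S (S m)) ltac:(lia)).
    assert (/ rho p l2 m <= / rho p l1 m) by (apply Rinv_le_contravar; auto).
    unfold Rdiv; nra.
Qed.

Lemma admissible_le l1 l2 : l1 <= l2 -> admissible p l1 -> admissible p l2.
Proof.
  intros Hl [H1 Hpos]; split; [lra|]; intro m.
  eapply Rlt_le_trans; [apply Hpos|]; apply rho_le_lam; auto; lra.
Qed.

Lemma rho_continuous m lam0 : (forall j, (j < m)%nat -> 0 < rho p lam0 j) ->
  continuity_pt (fun l => rho p l m) lam0.
Proof.
  revert lam0; induction m as [|m IH]; intros lam0 Hpos; simpl.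
  - apply (continuity_pt_mult (fun x => x) (fun _ => p 1%nat)).
    + apply continuity_pt_id.
    + apply continuity_pt_const; intros a b; reflexivity.
  - apply (continuity_pt_minus (fun l => l * p (S (S m))) (fun l => 1 / rho p l m)).
    + apply (continuity_pt_mult (fun x => x) (fun _ => p (S (S m)))).
      * apply continuity_pt_id.
      * apply continuity_pt_const; intros a b; reflexivity.
    + apply (continuity_pt_div (fun _ => 1) (fun l => rho p l m)).
      * apply continuity_pt_const; intros a b; reflexivity.
      * apply IH; intros j Hj; apply Hpos; lia.
      * specialize (Hpos m ltac:(lia)); lra.
Qed.

Lemma rho_pos_near lam0 : admissible p lam0 -> forall m, exists d, 0 < d /\
  forall l, Rabs (l - lam0) < d -> forall j, (j <= m)%nat -> 0 < rho p l j.
Proof.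
  intros [_ Hpos] m; induction m as [|m [d1 [Hd1 IH]]].
  all: match goal with |- exists d, _ /\ forall l, _ -> forall j, (j <= ?k)%nat -> _ =>
    destruct (cont_pt_ball _ _ (rho_continuous k lam0 (fun j _ => Hpos j)) _ (Hpos k))
      as [d [Hd Hball]] end.
  - exists d; split; [exact Hd|]; intros l Hl j Hj; replace j with 0%nat by lia.
    specialize (Hball l Hl); apply Rabs_def2 in Hball; lra.
  - exists (Rmin d d1); split; [apply Rmin_pos; auto|]; intros l Hl j Hj.
    pose proof (Rmin_l d d1); pose proof (Rmin_r d d1).
    destruct (Nat.eq_dec j (S m)) as [->|Hne].
    + specialize (Hball l ltac:(lra)); apply Rabs_def2 in Hball; lra.
    + apply IH; [lra|lia].
Qed.

Lemma rho_ge_1_tail l N : (forall m, (N <= m)%nat -> 2 <= l * p (S (S m))) ->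
  1 <= rho p l N -> forall m, (N <= m)%nat -> 1 <= rho p l m.
Proof.
  intros Hq HN m Hm; induction Hm as [|m Hm IH]; [exact HN|]; simpl.
  assert (1 / rho p l m <= 1) by
    (unfold Rdiv; rewrite Rmult_1_l, <- Rinv_1; apply Rinv_le_contravar; lra).
  specialize (Hq m Hm); lra.
Qed.

(* Decreasing [lam] a little keeps the finitely many [rho_j], [j <= N], positive
   by continuity, and beyond [N] the tail recursion cannot drop below 1. *)
Lemma admissible_below lam0 N : admissible p lam0 ->
  (forall m, (N <= m)%nat -> 4 <= lam0 * p (S (S m))) -> 1 < rho p lam0 N ->
  exists l, l < lam0 /\ admissible p l.
Proof.
  intros Hadm Hq HN.
  destruct (rho_pos_near lam0 Hadm N) as [d1 [Hd1 Hnear]].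
  destruct Hadm as [Hlam0 Hpos].
  destruct (cont_pt_ball _ _ (rho_continuous N lam0 (fun j _ => Hpos j))
              (rho p lam0 N - 1) ltac:(lra)) as [d2 [Hd2 Hball]].
  set (d := Rmin (Rmin d1 d2) lam0).
  assert (Hd : 0 < d <= d1 /\ d <= d2 /\ d <= lam0).
  { unfold d; pose proof (Rmin_l (Rmin d1 d2) lam0); pose proof (Rmin_r (Rmin d1 d2) lam0).
    pose proof (Rmin_l d1 d2); pose proof (Rmin_r d1 d2).
    repeat split; try lra; repeat apply Rmin_pos; assumption. }
  set (l := lam0 - d / 2).
  assert (Hl : Rabs (l - lam0) < d).
  { unfold l; replace (lam0 - d / 2 - lam0) with (- (d / 2)) by ring.
    rewrite Rabs_Ropp, Rabs_pos_eq; lra. }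
  assert (HlN : 1 <= rho p l N).
  { specialize (Hball l ltac:(lra)); apply Rabs_def2 in Hball; lra. }
  assert (Htail : forall m, (N <= m)%nat -> 1 <= rho p l m).
  { apply rho_ge_1_tail; [|exact HlN]; intros m Hm.
    specialize (Hq m Hm); pose proof (p_pos (S (S m)) ltac:(lia)).
    assert (lam0 <= 2 * l) by (unfold l; lra); nra. }
  exists l; split; [unfold l; lra|]; split; [unfold l; lra|]; intro m.
  destruct (Nat.le_gt_cases m N) as [HmN|HmN].
  - apply Hnear; [lra|exact HmN].
  - specialize (Htail m ltac:(lia)); lra.
Qed.

Lemma admissible_prod_gt_1 l : admissible p l -> 1 < (l * p 1%nat) * (l * p 2%nat).
Proof.
  intros [_ Hpos].
  pose proof (rho_SS_eq p l 0 (Hpos 0%nat)) as Heq; pose proof (Hpos 1%nat) as H1.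
  pose proof (Hpos 0%nat) as H0; set (r1 := rho p l 1) in *; simpl in Heq, H0; nra.
Qed.

Lemma admissible_lam_p2_gt_1 l : admissible p l -> 1 < l * p 2%nat.
Proof.
  intro Hadm; pose proof (admissible_prod_gt_1 l Hadm).
  destruct (Hp 1%nat (le_n 1)) as [Hp1 Hp12]; pose proof (proj1 Hadm).
  assert (0 < l * p 1%nat < l * p 2%nat) by (split; nra).
  apply Rnot_le_lt; intro Hle; nra.
Qed.

Lemma admissible_gt_inv_sqrt l : admissible p l -> 1 / sqrt (p 1%nat * p 2%nat) < l.
Proof.
  intro Hadm; pose proof (admissible_prod_gt_1 l Hadm) as Hprod; destruct Hadm as [Hl _].
  pose proof (p_pos 1 (le_n 1)) as Hp1; pose proof (p_pos 2 ltac:(lia)) as Hp2.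
  assert (Hs : 0 < sqrt (p 1%nat * p 2%nat)) by (apply sqrt_lt_R0; nra).
  assert (1 < l * sqrt (p 1%nat * p 2%nat)).
  { rewrite <- (sqrt_pow2 l), <- sqrt_mult_alt, <- sqrt_1 by nra.
    apply sqrt_lt_1_alt; split; [lra|]; nra. }
  apply Rmult_lt_reg_r with (sqrt (p 1%nat * p 2%nat)); [exact Hs|].
  replace (1 / sqrt (p 1%nat * p 2%nat) * sqrt (p 1%nat * p 2%nat)) with 1
    by (field; lra); lra.
Qed.

Lemma rho_pos_at_infimum ls : 0 < ls -> (forall l, ls < l -> admissible p l) ->
  forall m, 0 < rho p ls m.
Proof.
  intros Hls Habove.
  enough (H : forall m j, (j <= m)%nat -> 0 < rho p ls j) by (intro m; exact (H m m (le_n m))).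
  induction m as [|m IH]; intros j Hj.
  { replace j with 0%nat by lia; simpl; pose proof (p_pos 1 (le_n 1)); nra. }
  destruct (Nat.eq_dec j (S m)) as [->|Hne]; [|apply IH; lia].
  apply Rnot_le_lt; intro Hle.
  set (q := p (S (S (S m)))).
  assert (Hq : 0 < q) by (apply p_pos; lia).
  (* for [l] slightly above [ls], positivity of [rho_(m+2)] forces [rho_(m+1) > 1/(l q)],
     which stays away from 0 while [rho_(m+1)(ls) <= 0] *)
  assert (Heps : 0 < 1 / ((ls + 1) * q)) by (apply Rdiv_lt_0_compat; nra).
  destruct (cont_pt_ball _ _ (rho_continuous (S m) ls (fun j Hj => IH j ltac:(lia))) _ Heps)
    as [d [Hd Hball]].
  set (l := ls + Rmin d 1 / 2).
  pose proof (Rmin_l d 1); pose proof (Rmin_r d 1).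
  assert (Hmin : 0 < Rmin d 1) by (apply Rmin_pos; lra).
  destruct (Habove l ltac:(unfold l; lra)) as [Hl Hpos].
  assert (Hclose : rho p l (S m) < 1 / ((ls + 1) * q)).
  { assert (Rabs (l - ls) < d) by (rewrite Rabs_pos_eq; unfold l; lra).
    specialize (Hball l H1); apply Rabs_def2 in Hball; lra. }
  assert (Hfar : 1 / ((ls + 1) * q) <= 1 / (l * q)).
  { unfold Rdiv; rewrite !Rmult_1_l; apply Rinv_le_contravar; [nra|].
    apply Rmult_le_compat_r; unfold l; lra. }
  pose proof (rho_SS_eq p l (S m) (Hpos (S m))) as Heq; fold q in Heq.
  assert (0 < rho p l (S m) * rho p l (S (S m))) by (apply Rmult_lt_0_compat; apply Hpos).
  assert (l * q * rho p l (S m) < 1).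
  { apply Rlt_le_trans with (l * q * (1 / (l * q))); [apply Rmult_lt_compat_l; nra|].
    right; field; nra. }
  nra.
Qed.

Lemma admissible_minimum l0 : admissible p l0 ->
  exists ls, admissible p ls /\ forall l, admissible p l -> ls <= l.
Proof.
  intro Hl0.
  set (E := fun y => forall l, admissible p l -> y <= l).
  destruct (completeness E) as [ls [Hub Hleast]].
  { exists l0; intros y Hy; exact (Hy l0 Hl0). }
  { exists 0; intros l [Hl _]; lra. }
  assert (Hmin : forall l, admissible p l -> ls <= l) by
    (intros l Hl; apply Hleast; intros y Hy; exact (Hy l Hl)).
  assert (Hls : 0 < ls).
  { apply Rlt_le_trans with (1 / sqrt (p 1%nat * p 2%nat)).
    - pose proof (p_pos 1 (le_n 1)); pose proof (p_pos 2 ltac:(lia)).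
      apply Rdiv_lt_0_compat; [lra|]; apply sqrt_lt_R0; nra.
    - apply Hub; intros l Hl; left; apply admissible_gt_inv_sqrt; exact Hl. }
  assert (Habove : forall l, ls < l -> admissible p l).
  { intros l Hl; apply NNPP; intro Hna.
    assert (E l) by (intros l' Hl'; apply Rnot_lt_le; intro Hlt;
                     apply Hna, (admissible_le l'); [lra|exact Hl']).
    specialize (Hub l H); lra. }
  exists ls; split; [split; [exact Hls|] | exact Hmin].
  apply rho_pos_at_infimum; assumption.
Qed.

Lemma rho_ge_fixed_point U : 0 < U -> U ^ 2 * (p 1%nat * p 2%nat - p 1%nat ^ 2) = 1 ->
  forall m, U * p 1%nat <= rho p U m.
Proof.
  intros HU Hfix.
  pose proof (p_pos 1 (le_n 1)) as Hp1.
  assert (Hc : 0 < U * p 1%nat) by nra.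
  (* [U p_1] is the fixed point of [x |-> U p_2 - 1/x] *)
  assert (Hstep : U * p 2%nat - 1 / (U * p 1%nat) = U * p 1%nat)
    by (unfold Rdiv; rewrite <- Hfix; field; lra).
  induction m as [|m IH]; simpl; [lra|].
  assert (p 2%nat <= p (S (S m))) by (apply p_le; lia).
  assert (/ rho p U m <= / (U * p 1%nat)) by (apply Rinv_le_contravar; lra).
  unfold Rdiv in *; nra.
Qed.

Lemma fixed_point_admissible U : 0 < U ->
  U ^ 2 * (p 1%nat * p 2%nat - p 1%nat ^ 2) = 1 -> admissible p U.
Proof.
  intros HU Hfix; split; [exact HU|]; intro m.
  pose proof (rho_ge_fixed_point U HU Hfix m); pose proof (p_pos 1 (le_n 1)); nra.
Qed.

Lemma inv_sqrt_fixed_point :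
  0 < 1 / sqrt (p 1%nat * p 2%nat - p 1%nat ^ 2) /\
  (1 / sqrt (p 1%nat * p 2%nat - p 1%nat ^ 2)) ^ 2 * (p 1%nat * p 2%nat - p 1%nat ^ 2) = 1.
Proof.
  destruct (Hp 1%nat (le_n 1)) as [Hp1 Hp12].
  assert (Hx : 0 < p 1%nat * p 2%nat - p 1%nat ^ 2) by nra.
  pose proof (sqrt_lt_R0 _ Hx); pose proof (sqrt_sqrt _ (Rlt_le _ _ Hx)).
  split; [apply Rdiv_lt_0_compat; lra|].
  replace ((1 / sqrt (p 1%nat * p 2%nat - p 1%nat ^ 2)) ^ 2) with
    (/ (sqrt (p 1%nat * p 2%nat - p 1%nat ^ 2) * sqrt (p 1%nat * p 2%nat - p 1%nat ^ 2)))
    by (field; lra).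
  rewrite H0; field; lra.
Qed.

Section Unbounded.

Hypothesis Hlim : is_lim_seq p p_infty.

Lemma p_eventually_gt B : exists N, forall n, (N <= n)%nat -> B < p n.
Proof. apply is_lim_seq_spec in Hlim; apply (Hlim B). Qed.

Lemma p_eventually_ge_4 lam : 0 < lam ->
  exists N, forall m, (N <= m)%nat -> 4 <= lam * p (S (S m)).
Proof.
  intro Hlam; destruct (p_eventually_gt (4 / lam)) as [N HN]; exists N; intros m Hm.
  specialize (HN (S (S m)) ltac:(lia)).
  apply Rmult_lt_compat_l with (r := lam) in HN; [|exact Hlam].
  replace (lam * (4 / lam)) with 4 in HN by (field; lra); lra.
Qed.

Lemma rho_fixed_point_unbounded U : 0 < U ->
  U ^ 2 * (p 1%nat * p 2%nat - p 1%nat ^ 2) = 1 ->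
  forall N, exists m, (N <= m)%nat /\ 1 < rho p U m.
Proof.
  intros HU Hfix N.
  pose proof (rho_ge_fixed_point U HU Hfix) as Hge.
  pose proof (p_pos 1 (le_n 1)).
  destruct (p_eventually_gt ((1 + 1 / (U * p 1%nat)) / U)) as [M HM].
  exists (S (N + M)); split; [lia|]; simpl.
  specialize (HM (S (S (N + M))) ltac:(lia)).
  apply Rmult_lt_compat_l with (r := U) in HM; [|exact HU].
  replace (U * ((1 + 1 / (U * p 1%nat)) / U)) with (1 + 1 / (U * p 1%nat)) in HM
    by (field; lra).
  assert (/ rho p U (N + M) <= / (U * p 1%nat)) by
    (specialize (Hge (N + M)%nat); apply Rinv_le_contravar; nra).
  unfold Rdiv in *; lra.
Qed.

Lemma minimum_tail_bounded ls : admissible p ls -> (forall l, admissible p l -> ls <= l) ->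
  exists N, tail_bounded p ls N.
Proof.
  intros Hadm Hmin.
  destruct (p_eventually_ge_4 ls (proj1 Hadm)) as [N HN]; exists N; intros m Hm.
  split; [exact (HN m Hm)|].
  apply Rnot_lt_le; intro Hgt.
  destruct (admissible_below ls m Hadm (fun k Hk => HN k ltac:(lia)) Hgt) as [l [Hl Hladm]].
  specialize (Hmin l Hladm); lra.
Qed.

(* [rho_m] stays bounded by 1 at the minimum but is unbounded at the fixed point. *)
Lemma minimum_lt_fixed_point ls U N : 0 < U ->
  U ^ 2 * (p 1%nat * p 2%nat - p 1%nat ^ 2) = 1 ->
  tail_bounded p ls N -> ls <= U -> ls < U.
Proof.
  intros HU Hfix HN [Hlt| ->]; [exact Hlt|].
  destruct (rho_fixed_point_unbounded U HU Hfix N) as [m [Hm Hgt]].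
  specialize (HN m Hm); lra.
Qed.

End Unbounded.

End Increasing.

Lemma Gcf_bounds p lam n : 4 <= lam * p n -> 0 < Gcf p lam n <= 1 / 2.
Proof.
  intro Ha; unfold Gcf; set (a := lam * p n) in *.
  replace (lam ^ 2 * p n ^ 2 - 4) with (a ^ 2 - 4) by (unfold a; ring).
  assert (sqrt (a ^ 2 - 4) < a).
  { rewrite <- (sqrt_pow2 a) at 2 by lra; apply sqrt_lt_1_alt; split; nra. }
  assert (a - 1 <= sqrt (a ^ 2 - 4)).
  { rewrite <- (sqrt_pow2 (a - 1)) by lra; apply sqrt_le_1_alt; nra. }
  lra.
Qed.

Lemma cf_step_contraction a t r : 4 <= a -> 0 < t <= 1 / 2 -> 0 < r <= 1 ->
  0 < 1 / (a - t) <= 1 / 2 /\ Rabs (1 / (a - t) - 1 / (a - r)) <= Rabs (t - r) / 4.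
Proof.
  intros Ha Ht Hr; split.
  - split; [apply Rdiv_lt_0_compat; lra|].
    apply Rmult_le_reg_r with (a - t); [lra|]; field_simplify; lra.
  - replace (1 / (a - t) - 1 / (a - r)) with ((t - r) / ((a - t) * (a - r))) by (field; lra).
    rewrite Rabs_div, (Rabs_pos_eq ((a - t) * (a - r))) by nra.
    unfold Rdiv; apply Rmult_le_compat_l; [apply Rabs_pos|]; apply Rinv_le_contravar; nra.
Qed.

Section ContinuedFraction.

Variables (p : nat -> R) (lam : R) (N0 : nat).
Hypothesis Hp : pos_increasing p.
Hypothesis Hadm : admissible p lam.
Hypothesis Htail : tail_bounded p lam N0.

Lemma rho_cf_step m : rho p lam m = 1 / (lam * p (S (S m)) - rho p lam (S m)).
Proof.
  pose proof (proj2 Hadm m); simpl.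
  replace (lam * p (S (S m)) - (lam * p (S (S m)) - 1 / rho p lam m)) with (1 / rho p lam m)
    by ring.
  field; lra.
Qed.

Lemma Fcf_approx k m : (N0 <= m)%nat ->
  Fcf_defined p lam (S (S m)) k /\ 0 < Fcf p lam (S (S m)) k <= 1 / 2 /\
  Rabs (Fcf p lam (S (S m)) k - rho p lam m) <= (1 / 4) ^ S k.
Proof.
  revert m; induction k as [|k IH]; intros m Hm;
    destruct (Htail m Hm) as [Ha _]; destruct (Htail (S m) ltac:(lia)) as [Ha' Hr'];
    pose proof (proj2 Hadm (S m)); simpl Fcf; simpl Fcf_defined; rewrite rho_cf_step.
  - pose proof (Gcf_bounds p lam (S (S (S m))) Ha') as HG.
    destruct (cf_step_contraction _ _ (rho p lam (S m)) Ha HG) as [HF Hd]; [lra|].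
    assert (0 < p (S (S (S m)))) by (apply (p_pos p Hp); lia).
    repeat split; try lra.
    + apply Rle_ge, Rmult_le_reg_r with (p (S (S (S m)))); [lra|]; field_simplify; lra.
    + eapply Rle_trans; [exact Hd|]; rewrite pow_1.
      assert (Rabs (Gcf p lam (S (S (S m))) - rho p lam (S m)) <= 1)
        by (apply Rabs_le; lra); lra.
  - destruct (IH (S m) ltac:(lia)) as [Hdef [HF Hd]].
    destruct (cf_step_contraction _ _ (rho p lam (S m)) Ha HF) as [HF' Hd']; [lra|].
    refine (conj (conj Hdef _) (conj HF' _)); [lra|].
    eapply Rle_trans; [exact Hd'|].
    change ((1 / 4) ^ S (S k)) with (1 / 4 * (1 / 4) ^ S k); lra.
Qed.

Lemma Fcf_lim_tail m : (N0 <= m)%nat -> Fcf_lim p lam (S (S m)) (rho p lam m).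
Proof.
  intro Hm; split.
  - exists 0%nat; intros k _; apply (Fcf_approx k m Hm).
  - apply is_lim_seq_spec; intro eps.
    destruct (pow_lt_1_zero (1 / 4) ltac:(rewrite Rabs_pos_eq; lra) eps (cond_pos eps))
      as [K HK].
    exists K; intros k Hk; eapply Rle_lt_trans; [apply (Fcf_approx k m Hm)|].
    specialize (HK (S k) ltac:(lia)); rewrite Rabs_pos_eq in HK; [exact HK|].
    apply pow_le; lra.
Qed.

Lemma Fcf_lim_pred m : Fcf_lim p lam (S (S (S m))) (rho p lam (S m)) ->
  Fcf_lim p lam (S (S m)) (rho p lam m).
Proof.
  intros [[K HK] Hlim].
  pose proof (proj2 Hadm m) as Hrm.
  assert (Hden : lam * p (S (S m)) - rho p lam (S m) = 1 / rho p lam m) by (simpl; ring).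
  assert (Hpos : 0 < 1 / rho p lam m) by (apply Rdiv_lt_0_compat; lra).
  assert (Hlim' : is_lim_seq (fun k => lam * p (S (S m)) - Fcf p lam (S (S (S m))) k)
                    (lam * p (S (S m)) - rho p lam (S m)))
    by (apply is_lim_seq_minus'; [apply is_lim_seq_const|exact Hlim]).
  split.
  - pose proof Hlim as Hspec; apply is_lim_seq_spec in Hspec.
    destruct (Hspec (mkposreal _ Hpos)) as [K2 HK2]; simpl in HK2.
    exists (S (Nat.max K K2)); intros [|k] Hk; [lia|]; simpl; split; [apply HK; lia|].
    specialize (HK2 k ltac:(lia)); apply Rabs_def2 in HK2; lra.
  - apply is_lim_seq_incr_1.
    apply is_lim_seq_inv in Hlim'; [|rewrite Hden; intro H; injection H; lra].
    rewrite Hden in Hlim'; simpl Rbar_inv in Hlim'.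
    replace (/ (1 / rho p lam m)) with (rho p lam m) in Hlim' by (field; lra).
    eapply is_lim_seq_ext; [|exact Hlim']; intro k; simpl; unfold Rdiv; ring.
Qed.

Lemma Fcf_lim_rho m : Fcf_lim p lam (S (S m)) (rho p lam m).
Proof.
  enough (H : forall d m, (N0 <= m + d)%nat -> Fcf_lim p lam (S (S m)) (rho p lam m))
    by exact (H N0 m ltac:(lia)).
  induction d as [|d IH]; intros m' Hm.
  - apply Fcf_lim_tail; lia.
  - apply Fcf_lim_pred, IH; lia.
Qed.

Lemma admissible_cf_equation : cf_equation p lam.
Proof. exact (Fcf_lim_rho 0). Qed.

End ContinuedFraction.

Section Decay.

Variables (p : nat -> R) (lam : R).
Hypothesis Hp : pos_increasing p.
Hypothesis Hadm : admissible p lam.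

Lemma tail_bounded_extend N M : (forall m, (M <= m)%nat -> 4 <= lam * p (S (S m))) ->
  tail_bounded p lam N -> tail_bounded p lam M.
Proof.
  intros Hq HN.
  enough (H : forall d m, (M <= m)%nat -> (N <= m + d)%nat -> rho p lam m <= 1)
    by (intros m Hm; split; [exact (Hq m Hm)|exact (H N m Hm ltac:(lia))]).
  induction d as [|d IH]; intros m Hm HmN.
  - apply (HN m); lia.
  - pose proof (rho_le_inv3 p lam m (proj2 Hadm m) (Hq m Hm) (IH (S m) ltac:(lia) ltac:(lia))).
    lra.
Qed.

Lemma cseq_step m : 4 <= lam * p (S m) -> 4 <= lam * p (S (S m)) ->
  rho p lam (S m) <= 1 -> Rabs (cseq p lam (S (S m))) <= Rabs (cseq p lam (S m)) / 3.
Proof.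
  intros H1 H2 H3; unfold cseq.
  change (eta_prod p lam (S (S m))) with (eta_prod p lam (S m) * eta p lam (S (S m))).
  rewrite eta_SS; set (P := eta_prod p lam (S m)).
  assert (Hp1 : 0 < p (S m)) by (apply (p_pos p Hp); lia).
  assert (Hp2 : 0 < p (S (S m))) by (apply (p_pos p Hp); lia).
  pose proof (proj2 Hadm m) as Hr; pose proof (proj2 Hadm (S m)).
  pose proof (rho_SS_eq p lam m Hr) as Heq.
  pose proof (rho_le_inv3 p lam m Hr H2 H3).
  (* [lam p_(m+2) rho_m = 1 + rho_m rho_(m+1) <= 4/3 <= lam p_(m+1) / 3] *)
  assert (Hkey : p (S (S m)) * rho p lam m <= p (S m) / 3).
  { apply Rmult_le_reg_l with lam; [exact (proj1 Hadm)|]; nra. }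
  rewrite !Rabs_mult, Rabs_Ropp, (Rabs_pos_eq (p (S (S m)))), (Rabs_pos_eq (p (S m))),
    (Rabs_pos_eq (rho p lam m)) by lra.
  pose proof (Rabs_pos P); nra.
Qed.

Lemma cseq_decay N : tail_bounded p lam N ->
  forall j, Rabs (cseq p lam (S (S N) + j)) <= (1 / 3) ^ j * Rabs (cseq p lam (S (S N))).
Proof.
  intros HN j; induction j as [|j IH]; [rewrite Nat.add_0_r; simpl; lra|].
  replace (S (S N) + S j)%nat with (S (S (S N + j))) by lia.
  destruct (HN (S N + j)%nat ltac:(lia)) as [H2 _]; destruct (HN (N + j)%nat ltac:(lia)) as [H1 _].
  destruct (HN (S (S N + j))%nat ltac:(lia)) as [_ H3].
  eapply Rle_trans; [apply cseq_step; [exact H1|exact H2|exact H3]|].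
  change (S (S N + j)) with (S (S N) + j)%nat.
  change ((1 / 3) ^ S j) with (1 / 3 * (1 / 3) ^ j); lra.
Qed.

Lemma cseq_exponential_decay N : tail_bounded p lam N ->
  exists (K r : R) (M : nat), 0 < r < 1 /\
    forall n, (M <= n)%nat -> Rabs (cseq p lam n) <= K * r ^ n.
Proof.
  intro HN; set (M := S (S N)).
  exists (Rabs (cseq p lam M) * 3 ^ M), (1 / 3), M; split; [lra|]; intros n Hn.
  replace n with (M + (n - M))%nat at 1 2 by lia.
  eapply Rle_trans; [apply cseq_decay; exact HN|].
  rewrite pow_add.
  assert (H3 : 3 ^ M * (1 / 3) ^ M = 1)
    by (rewrite <- Rpow_mult_distr; replace (3 * (1 / 3)) with 1 by field; apply pow1).
  pose proof (Rabs_pos (cseq p lam M)); pose proof (pow_le (1 / 3) (n - M) ltac:(lra)).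
  right; replace (Rabs (cseq p lam M) * 3 ^ M * ((1 / 3) ^ M * (1 / 3) ^ (n - M)))
    with (3 ^ M * (1 / 3) ^ M * ((1 / 3) ^ (n - M) * Rabs (cseq p lam M))) by ring.
  rewrite H3; unfold M; ring.
Qed.

Lemma tail_bounded_beyond N n0 : (1 <= n0)%nat ->
  (forall m, (1 <= m)%nat -> p m <= 4 * p 2%nat -> (m <= n0)%nat) ->
  tail_bounded p lam N -> tail_bounded p lam (pred n0).
Proof.
  intros Hn0 Hmax HN; apply (tail_bounded_extend N); [|exact HN]; intros m Hm.
  pose proof (admissible_lam_p2_gt_1 p Hp lam Hadm).
  assert (4 * p 2%nat < p (S (S m))).
  { apply Rnot_le_lt; intro Hle; specialize (Hmax (S (S m)) ltac:(lia) Hle); lia. }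
  pose proof (p_pos p Hp 2 ltac:(lia)); nra.
Qed.

End Decay.

Definition poly_exp_const (t : R) : R := exp (2 * ln 3 + t * ln (t / ln 3 + 1)).

Lemma poly_exp_const_pos t : 0 < poly_exp_const t.
Proof. apply exp_pos. Qed.

Lemma ln_le_sub_1 y : 0 < y -> ln y <= y - 1.
Proof. intro Hy; pose proof (exp_ineq1_le (ln y)); rewrite exp_ln in H; lra. Qed.

Lemma exp_le_exp x y : x <= y -> exp x <= exp y.
Proof. intros [Hlt| ->]; [left; apply exp_increasing; exact Hlt|lra]. Qed.

Lemma Rpower_le_poly_exp_const t j : 0 <= t ->
  Rpower (INR j + 2) t <= poly_exp_const t * 3 ^ j.
Proof.
  intro Ht.
  assert (Hl3 : 0 < ln 3) by (rewrite <- ln_1; apply ln_increasing; lra).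
  pose proof (pos_INR j) as Hj.
  set (m := t / ln 3 + 1).
  assert (Hm : 1 <= m) by (assert (0 <= t / ln 3) by (apply Rdiv_le_0_compat; lra); unfold m; lra).
  assert (Htm : t / m <= ln 3).
  { apply Rmult_le_reg_r with m; [lra|]; unfold m; field_simplify; lra. }
  (* [ln (j+2) = ln ((j+2)/m) + ln m <= (j+2)/m - 1 + ln m] and [t/m <= ln 3] *)
  assert (Hln : ln (INR j + 2) <= (INR j + 2) / m - 1 + ln m).
  { replace (ln (INR j + 2)) with (ln ((INR j + 2) / m) + ln m).
    - pose proof (ln_le_sub_1 ((INR j + 2) / m) ltac:(apply Rdiv_lt_0_compat; lra)); lra.
    - rewrite <- ln_mult by (try apply Rdiv_lt_0_compat; lra); f_equal; field; lra. }
  assert (Hdiv : t * ((INR j + 2) / m) <= (INR j + 2) * ln 3).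
  { replace (t * ((INR j + 2) / m)) with ((INR j + 2) * (t / m)) by (field; lra).
    apply Rmult_le_compat_l; lra. }
  unfold poly_exp_const; fold m.
  rewrite <- (Rpower_pow j 3) by lra; unfold Rpower; rewrite <- exp_plus.
  apply exp_le_exp; nra.
Qed.

Lemma Rpower_sqr x s : Rpower x s ^ 2 = Rpower x (2 * s).
Proof. unfold Rpower; simpl; rewrite Rmult_1_r, <- exp_plus; f_equal; ring. Qed.

Lemma Rpower_weight_growth s n0 j : 0 <= s -> (1 <= n0)%nat ->
  Rpower (INR (S n0 + j)) s ^ 2 <= Rpower (INR n0) s ^ 2 * poly_exp_const (2 * s) * 3 ^ j.
Proof.
  intros Hs Hn0; rewrite !Rpower_sqr.
  assert (HN : 1 <= INR n0) by (apply (le_INR 1); exact Hn0).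
  pose proof (pos_INR j).
  (* [n0 + 1 + j <= n0 (j + 2)] *)
  apply Rle_trans with (Rpower (INR n0 * (INR j + 2)) (2 * s)).
  - apply Rle_Rpower_l; [lra|]; rewrite plus_INR, S_INR; split; nra.
  - rewrite <- Rpower_mult_distr, Rmult_assoc by lra.
    apply Rmult_le_compat_l; [left; apply exp_pos|].
    apply Rpower_le_poly_exp_const; lra.
Qed.

Lemma Series_nonneg a : (forall k, 0 <= a k) -> ex_series a -> 0 <= Series a.
Proof.
  intros Ha Hex.
  replace 0 with (Series (fun k => 0 * a k)) by (rewrite Series_scal_l; ring).
  apply Series_le; [intro k; rewrite Rmult_0_l; split; [lra|apply Ha]|exact Hex].
Qed.

Lemma sum_f_R0_le_Series a n : (forall k, 0 <= a k) -> ex_series a ->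
  sum_f_R0 a n <= Series a.
Proof.
  intros Ha Hex; rewrite (Series_incr_n a (S n)) by (lia || exact Hex); simpl pred.
  pose proof (Series_nonneg (fun k => a (S n + k)%nat) (fun k => Ha _)
                (proj1 (ex_series_incr_n a (S n)) Hex)); lra.
Qed.

(* The head of the series is bounded by the weight [E] at [n0]; on the tail the
   weights grow at most like [3^j] while the terms decay like [9^(-j)]. *)
Lemma weighted_Series_bound (v a : nat -> R) n0 E D : (0 < n0)%nat -> 0 <= D ->
  (forall k, 0 <= a k) -> (forall k, 1 <= v k) -> (forall k, (k < n0)%nat -> v k <= E) ->
  (forall j, v (n0 + j)%nat <= E * D * 3 ^ j) ->
  (forall j, a (n0 + j)%nat <= (1 / 9) ^ j * a n0) ->
  ex_series (fun k => v k * a k) /\ ex_series a /\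
  Series (fun k => v k * a k) <= E * (1 + 3 / 2 * D) * Series a.
Proof.
  intros Hn0 HD Ha Hv Hhead Hvtail Hatail.
  assert (HE : 1 <= E) by (specialize (Hhead 0%nat Hn0); specialize (Hv 0%nat); lra).
  set (g := fun j => E * D * a n0 * (1 / 3) ^ j).
  assert (Htail : forall j, 0 <= v (n0 + j)%nat * a (n0 + j)%nat <= g j).
  { intro j; pose proof (Hv (n0 + j)%nat); pose proof (Ha (n0 + j)%nat).
    pose proof (Hvtail j); pose proof (Hatail j).
    assert (H39 : 3 ^ j * (1 / 9) ^ j = (1 / 3) ^ j)
      by (rewrite <- Rpow_mult_distr; f_equal; field).
    pose proof (pow_le (1 / 9) j ltac:(lra)); pose proof (Ha n0).
    unfold g; rewrite <- H39; split; [nra|].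
    apply Rle_trans with ((E * D * 3 ^ j) * ((1 / 9) ^ j * a n0)); [|right; ring].
    apply Rmult_le_compat; nra. }
  assert (Hgeom : ex_series g /\ Series g = E * D * a n0 * (3 / 2)).
  { assert (Hq : Rabs (1 / 3) < 1) by (rewrite Rabs_pos_eq; lra).
    split.
    - exact (ex_series_scal_l (E * D * a n0) _ (ex_series_geom _ Hq)).
    - unfold g; rewrite Series_scal_l, Series_geom by exact Hq; field. }
  assert (Hex : ex_series (fun k => v k * a k)).
  { apply (proj2 (ex_series_incr_n _ n0)).
    apply (@ex_series_le R_AbsRing R_CompleteNormedModule _ g); [|exact (proj1 Hgeom)].
    intro j; change (norm ?x) with (Rabs x); rewrite Rabs_pos_eq; apply Htail. }
  assert (Hexa : ex_series a).
  { apply (@ex_series_le R_AbsRing R_CompleteNormedModule _ (fun k => v k * a k));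
      [|exact Hex].
    intro k; change (norm (a k)) with (Rabs (a k)); rewrite Rabs_pos_eq by apply Ha.
    pose proof (Hv k); pose proof (Ha k); nra. }
  split; [exact Hex|split; [exact Hexa|]].
  rewrite (Series_incr_n _ n0 Hn0 Hex).
  assert (Hhead_sum : sum_f_R0 (fun k => v k * a k) (pred n0) <= E * sum_f_R0 a (pred n0)).
  { rewrite scal_sum; apply sum_Rle; intros k Hk.
    pose proof (Hhead k ltac:(lia)); pose proof (Ha k); nra. }
  assert (Htail_sum : Series (fun j => v (n0 + j)%nat * a (n0 + j)%nat) <= Series g)
    by (apply Series_le; [exact Htail|exact (proj1 Hgeom)]).
  assert (Hsum : sum_f_R0 a (pred n0) + a n0 <= Series a).
  { replace (sum_f_R0 a (pred n0) + a n0) with (sum_f_R0 a n0)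
      by (replace n0 with (S (pred n0)) at 1 3 by lia; reflexivity).
    apply sum_f_R0_le_Series; [exact Ha|exact Hexa]. }
  rewrite (proj2 Hgeom) in Htail_sum.
  set (S1 := sum_f_R0 a (pred n0)) in *.
  pose proof (Ha n0); pose proof (cond_pos_sum a (pred n0) Ha) as HS1.
  assert (E * (1 + 3 / 2 * D) * (S1 + a n0) <= E * (1 + 3 / 2 * D) * Series a)
    by (apply Rmult_le_compat_l; nra).
  assert (0 <= E * D * S1) by (apply Rmult_le_pos; [nra|exact HS1]).
  nra.
Qed.

Definition l2_const (s : R) : R := sqrt (1 + 3 / 2 * poly_exp_const (2 * s)).

Lemma l2_const_pos s : 0 < l2_const s.
Proof. apply sqrt_lt_R0; pose proof (poly_exp_const_pos (2 * s)); lra. Qed.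

Lemma Rpower_ge_1 x s : 1 <= x -> 0 <= s -> 1 <= Rpower x s.
Proof.
  intros Hx Hs.
  replace 1 with (Rpower 1 s) at 1 by (unfold Rpower; rewrite ln_1, Rmult_0_r; apply exp_0).
  apply Rle_Rpower_l; lra.
Qed.

Lemma l2_weighted_bound (c : nat -> R) s n0 : 0 <= s -> (1 <= n0)%nat ->
  (forall j, Rabs (c (S n0 + j)%nat) <= (1 / 3) ^ j * Rabs (c (S n0))) ->
  l2_finite (fun n => Rpower (INR n) s * c n) /\ l2_finite c /\
  sqrt (l2sq (fun n => Rpower (INR n) s * c n))
    <= l2_const s * Rpower (INR n0) s * sqrt (l2sq c).
Proof.
  intros Hs Hn0 Hdecay.
  set (w := fun n => Rpower (INR n) s).
  assert (Hw1 : forall n, (1 <= n)%nat -> 1 <= w n)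
    by (intros n Hn; apply Rpower_ge_1; [apply (le_INR 1); exact Hn|exact Hs]).
  destruct (weighted_Series_bound (fun k => w (S k) ^ 2) (fun k => c (S k) ^ 2) n0
              (w n0 ^ 2) (poly_exp_const (2 * s)) Hn0) as [Hex [Hexc Hbound]].
  - left; apply poly_exp_const_pos.
  - intro k; apply pow2_ge_0.
  - intro k; specialize (Hw1 (S k) ltac:(lia)); cbv beta; nra.
  - intros k Hk; pose proof (Hw1 (S k) ltac:(lia)); apply pow_incr; split; [lra|].
    apply Rle_Rpower_l; [exact Hs|]; split; [apply lt_0_INR|apply le_INR]; lia.
  - intro j; exact (Rpower_weight_growth s n0 j Hs Hn0).
  - intro j; specialize (Hdecay j).
    replace ((1 / 9) ^ j) with (((1 / 3) ^ j) ^ 2)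
      by (rewrite <- pow_mult, Nat.mul_comm, pow_mult; f_equal; field).
    rewrite <- Rpow_mult_distr, <- (pow2_abs (c (S (n0 + j)))),
      <- (pow2_abs ((1 / 3) ^ j * c (S n0))).
    apply pow_incr; split; [apply Rabs_pos|].
    rewrite Rabs_mult, (Rabs_pos_eq ((1 / 3) ^ j)) by (apply pow_le; lra); exact Hdecay.
  - assert (Hsq : forall k, (Rpower (INR (S k)) s * c (S k)) ^ 2 = w (S k) ^ 2 * c (S k) ^ 2)
      by (intro k; apply Rpow_mult_distr).
    unfold l2_finite, l2sq; cbv beta.
    split; [exact (ex_series_ext _ _ (fun k => eq_sym (Hsq k)) Hex)|split; [exact Hexc|]].
    rewrite (Series_ext _ _ Hsq).
    pose proof (Hw1 n0 Hn0); pose proof (l2_const_pos s).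
    apply Rle_trans with (sqrt ((l2_const s * w n0) ^ 2 * Series (fun k => c (S k) ^ 2))).
    + apply sqrt_le_1_alt; rewrite Rpow_mult_distr; unfold l2_const.
      rewrite pow2_sqrt by (pose proof (poly_exp_const_pos (2 * s)); lra).
      nra.
    + rewrite sqrt_mult_alt, sqrt_pow2 by (apply pow2_ge_0 || nra); right; reflexivity.
Qed.

Theorem theorem2p2 :
  exists C : R -> R, (forall s : R, 0 <= s -> 0 < C s) /\
  forall p : nat -> R,
    (forall n : nat, (1 <= n)%nat -> 0 < p n /\ p n < p (S n)) ->
    is_lim_seq p p_infty ->
    exists lam : R,
      0 < lam /\
      cf_equation p lam /\
      1 / sqrt (p 1%nat * p 2%nat) < lam /\
      lam < 1 / sqrt (p 1%nat * p 2%nat - (p 1%nat) ^ 2) /\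
      (exists (K r : R) (N : nat), 0 < r < 1 /\
         forall n : nat, (N <= n)%nat -> Rabs (cseq p lam n) <= K * r ^ n) /\
      (forall (s : R) (n0 : nat), 0 <= s ->
         (1 <= n0)%nat -> p n0 <= 4 * p 2%nat ->
         (forall m : nat, (1 <= m)%nat -> p m <= 4 * p 2%nat -> (m <= n0)%nat) ->
         l2_finite (fun n => Rpower (INR n) s * cseq p lam n) /\
         l2_finite (cseq p lam) /\
         sqrt (l2sq (fun n => Rpower (INR n) s * cseq p lam n))
           <= C s * (Rpower (INR n0) s + p 2%nat / p 1%nat) * sqrt (l2sq (cseq p lam))).
Proof.
  exists l2_const; split; [intros s _; apply l2_const_pos|]; intros p Hp Hlim.
  destruct (inv_sqrt_fixed_point p Hp) as [HU Hfix].
  pose proof (fixed_point_admissible p Hp _ HU Hfix) as HadmU.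
  destruct (admissible_minimum p Hp _ HadmU) as [ls [Hadm Hmin]].
  destruct (minimum_tail_bounded p Hp Hlim ls Hadm Hmin) as [N HN].
  exists ls; refine (conj _ (conj _ (conj _ (conj _ (conj _ _))))).
  - exact (proj1 Hadm).
  - exact (admissible_cf_equation p ls N Hp Hadm HN).
  - exact (admissible_gt_inv_sqrt p Hp ls Hadm).
  - exact (minimum_lt_fixed_point p Hp Hlim ls _ N HU Hfix HN (Hmin _ HadmU)).
  - exact (cseq_exponential_decay p ls Hp Hadm N HN).
  -
    intros s n0 Hs Hn0 _ Hmax.
    pose proof (cseq_decay p ls Hp Hadm _ (tail_bounded_beyond p ls Hp Hadm N n0 Hn0 Hmax HN))
      as Hdecay.
    replace (S (S (pred n0))) with (S n0) in Hdecay by lia.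
    destruct (l2_weighted_bound (cseq p ls) s n0 Hs Hn0 Hdecay) as [Hex [Hexc Hbound]].
    split; [exact Hex|split; [exact Hexc|]].
    eapply Rle_trans; [exact Hbound|].
    destruct (Hp 1%nat (le_n 1)) as [Hp1 Hp12]; pose proof (l2_const_pos s).
    assert (0 < p 2%nat / p 1%nat) by (apply Rdiv_lt_0_compat; lra).
    apply Rmult_le_compat_r; [apply sqrt_pos|]; nra.
Qed.
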